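(* Let $k>1$ and let $g_k:[0,+\infty)\to\mathbb{R}$ be $g_k(s)=\frac{s^2}{k+s^2}$. Then for every $\alpha>0$ there is a constant $c_\alpha>0$, independent of $\sigma$, such that for all $A,B\ge 0$, all $s\ge 0$ and all $\sigma>0$, $$A\cdot B\left[s\, g_k'\left((s-k)_+\right)\right]\le 2\sqrt2\,k\left[\alpha A^2 g_k\left((s-k)_+\right)+\alpha\sigma A^2+c_\alpha B^2\right].$$ Moreover, there exists a constant $c_k>0$, depending on $k$, such that $$s\,g_k'\left((s^2-k)_+\right)\le c_k\qquad\text{for all }s\ge 0.$$
   Context: $(\cdot)_+$ denotes the positive part; $g_k'$ is the derivative of $g_k$. *)

From Stdlib Require Import Reals.
From Coquelicot Require Import Coquelicot.
Open Scope R_scope.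

Definition gk (k s : R) : R := s ^ 2 / (k + s ^ 2).

Definition gk' (k s : R) : R := Derive (gk k) s.

Definition pos_part (x : R) : R := Rmax 0 x.

(* With x = (s - k)_+ or x = (s^2 - k)_+ one has s <= x + k, and g_k' >= 0 on
   [0, oo), so s g_k'(x) <= (x + k) g_k'(x) = 2 k x (x + k) / (k + x^2)^2.
   The square of this quantity is at most 8 k^3 g_k(x) <= 8 k^3, which gives the
   second bound at once, and the first follows from Young's inequality
   A B t <= eps A^2 t^2 + B^2 / (4 eps) with eps = sqrt 2 alpha / (4 k^2),
   i.e. c_alpha = k / (4 alpha). *)

From Stdlib Require Import Reals Lra Psatz.
From Coquelicot Require Import Coquelicot.
Open Scope R_scope.

Lemma is_derive_gk k x : 0 < k -> is_derive (gk k) x (2 * k * x / (k + x ^ 2) ^ 2).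
Proof.
intros hk; unfold gk.
assert (0 < k + x ^ 2) by nra.
auto_derive; [lra | field; lra].
Qed.

Lemma gk'_eq k x : 0 < k -> gk' k x = 2 * k * x / (k + x ^ 2) ^ 2.
Proof. intros hk; exact (is_derive_unique _ _ _ (is_derive_gk k x hk)). Qed.

Lemma gk_le1 k x : 0 < k -> gk k x <= 1.
Proof.
intros hk; unfold gk.
assert (0 < k + x ^ 2) by nra.
apply Rmult_le_reg_r with (k + x ^ 2); [lra |].
field_simplify; nra.
Qed.

Lemma gk'_ge0 k x : 0 < k -> 0 <= x -> 0 <= gk' k x.
Proof.
intros hk hx; rewrite gk'_eq by exact hk.
assert (0 < k + x ^ 2) by nra.
apply Rmult_le_pos; [nra | apply Rlt_le, Rinv_0_lt_compat, pow_lt; lra].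
Qed.

Lemma mul_gk'_le_shift k x s : 0 < k -> 0 <= x -> s <= x + k ->
  s * gk' k x <= (x + k) * gk' k x.
Proof. intros hk hx hs; apply Rmult_le_compat_r; [apply gk'_ge0 |]; lra. Qed.

Lemma sqr_shift_mul_gk'_le k x : 1 <= k -> 0 <= x ->
  ((x + k) * gk' k x) ^ 2 <= 8 * k ^ 3 * gk k x.
Proof.
intros hk hx; rewrite gk'_eq by lra; unfold gk.
set (D := k + x ^ 2).
assert (HD : 1 <= D) by (unfold D; nra).
replace (((x + k) * (2 * k * x / D ^ 2)) ^ 2)
  with (4 * k ^ 2 * x ^ 2 * (x + k) ^ 2 / D ^ 4) by (field; lra).
replace (8 * k ^ 3 * (x ^ 2 / D)) with (8 * k ^ 3 * x ^ 2 * D ^ 3 / D ^ 4) by (field; lra).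
apply Rmult_le_compat_r; [apply Rlt_le, Rinv_0_lt_compat, pow_lt; lra |].
(* (x + k)^2 = 2 k D - k (x - 1)^2 - (k - 1) x^2 <= 2 k D <= 2 k D^3 *)
assert (hxk : (x + k) ^ 2 <= 2 * k * D).
{ assert (0 <= k * (x - 1) ^ 2) by (apply Rmult_le_pos; [lra | apply pow2_ge_0]).
  assert (0 <= (k - 1) * x ^ 2) by (apply Rmult_le_pos; [lra | apply pow2_ge_0]).
  unfold D; nra. }
assert (D <= D ^ 3) by nra.
assert (0 <= k ^ 2 * x ^ 2) by (rewrite <- Rpow_mult_distr; apply pow2_ge_0).
replace (8 * k ^ 3 * x ^ 2 * D ^ 3) with (4 * k ^ 2 * x ^ 2 * (2 * k * D ^ 3)) by ring.
apply Rmult_le_compat_l; nra.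
Qed.

Lemma shift_mul_gk'_le_sqrt k x : 1 <= k -> 0 <= x ->
  (x + k) * gk' k x <= sqrt (8 * k ^ 3).
Proof.
intros hk hx.
assert (0 <= gk' k x) by (apply gk'_ge0; lra).
assert (0 < k ^ 3) by (apply pow_lt; lra).
rewrite <- (sqrt_pow2 ((x + k) * gk' k x)) by nra.
apply sqrt_le_1_alt.
pose proof (sqr_shift_mul_gk'_le k x hk hx); pose proof (gk_le1 k x); nra.
Qed.

Lemma mul_le_eps_sqr a b eps : 0 < eps -> a * b <= eps * a ^ 2 + b ^ 2 / (4 * eps).
Proof.
intros he.
assert (0 <= (2 * eps * a - b) ^ 2) by apply pow2_ge_0.
apply Rmult_le_reg_r with (4 * eps); [lra |].
field_simplify; [nra | lra].
Qed.

Lemma mul_gk'_young k x s A B eps : 1 <= k -> 0 <= x -> s <= x + k ->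
  0 <= A -> 0 <= B -> 0 < eps ->
  A * B * (s * gk' k x) <= eps * 8 * k ^ 3 * A ^ 2 * gk k x + B ^ 2 / (4 * eps).
Proof.
intros hk hx hs hA hB he.
set (t := (x + k) * gk' k x).
assert (hAB : 0 <= A * B) by nra.
apply Rle_trans with (A * B * t).
- apply Rmult_le_compat_l; [exact hAB | apply mul_gk'_le_shift; lra].
- rewrite Rmult_assoc, (Rmult_comm B), <- Rmult_assoc.
  apply Rle_trans with (eps * (A * t) ^ 2 + B ^ 2 / (4 * eps)); [apply mul_le_eps_sqr, he |].
  apply Rplus_le_compat_r.
  pose proof (sqr_shift_mul_gk'_le k x hk hx) as ht.
  rewrite Rpow_mult_distr.
  replace (eps * 8 * k ^ 3 * A ^ 2 * gk k x) with (eps * A ^ 2 * (8 * k ^ 3 * gk k x)) by ring.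
  rewrite <- Rmult_assoc; apply Rmult_le_compat_l; [| exact ht].
  apply Rmult_le_pos; [lra | apply pow2_ge_0].
Qed.

Lemma le_pos_part_sub_add s k : s <= pos_part (s - k) + k.
Proof. unfold pos_part; pose proof (Rmax_r 0 (s - k)); lra. Qed.

Lemma le_pos_part_sqr_sub_add s k : 1 <= k -> s <= pos_part (s ^ 2 - k) + k.
Proof.
intros hk; unfold pos_part.
pose proof (Rmax_l 0 (s ^ 2 - k)); pose proof (Rmax_r 0 (s ^ 2 - k)).
destruct (Rle_dec 1 s); [assert (s <= s ^ 2) by nra |]; lra.
Qed.

Lemma pos_part_ge0 x : 0 <= pos_part x.
Proof. apply Rmax_l. Qed.

Theorem mainTheorem3 (k : R) (hk : 1 < k) :
  (forall alpha : R, 0 < alpha ->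
     exists c_alpha : R, 0 < c_alpha /\
       forall A B s sigma : R, 0 <= A -> 0 <= B -> 0 <= s -> 0 < sigma ->
         A * B * (s * gk' k (pos_part (s - k)))
         <= 2 * sqrt 2 * k *
            (alpha * A ^ 2 * gk k (pos_part (s - k))
             + alpha * sigma * A ^ 2 + c_alpha * B ^ 2))
  /\
  (exists c_k : R, 0 < c_k /\
     forall s : R, 0 <= s -> s * gk' k (pos_part (s ^ 2 - k)) <= c_k).
Proof.
assert (hs2 : 0 < sqrt 2) by (apply sqrt_lt_R0; lra).
split.
- intros alpha ha; exists (k / (4 * alpha)); split; [apply Rdiv_lt_0_compat; lra |].
  intros A B s sigma hA hB _ hsig.
  set (eps := sqrt 2 * alpha / (4 * k ^ 2)).
  assert (he : 0 < eps) by (unfold eps; apply Rdiv_lt_0_compat; nra).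
  eapply Rle_trans.
  { apply (mul_gk'_young k _ s A B eps); try lra;
      [apply pos_part_ge0 | apply le_pos_part_sub_add]. }
  set (g := gk k (pos_part (s - k))).
  assert (hA2 : 0 <= alpha * sigma * A ^ 2) by (apply Rmult_le_pos; [nra | apply pow2_ge_0]).
  assert (h2 : sqrt 2 * sqrt 2 = 2) by (apply sqrt_sqrt; lra).
  assert (hcB : B ^ 2 / (4 * eps) = 2 * sqrt 2 * k * (k / (4 * alpha) * B ^ 2)).
  { transitivity (sqrt 2 * sqrt 2 * (k * B) ^ 2 / (2 * sqrt 2 * alpha));
      [rewrite h2 |]; unfold eps; field; lra. }
  assert (hcA : eps * 8 * k ^ 3 * A ^ 2 * g = 2 * sqrt 2 * k * (alpha * A ^ 2 * g))
    by (unfold eps; field; lra).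
  rewrite hcB, hcA, <- Rmult_plus_distr_l.
  apply Rmult_le_compat_l; [nra | lra].
- exists (sqrt (8 * k ^ 3)); split; [apply sqrt_lt_R0; pose proof (pow_lt k 3); lra |].
  intros s _.
  eapply Rle_trans; [apply mul_gk'_le_shift |]; try lra;
    [apply pos_part_ge0 | apply le_pos_part_sqr_sub_add; lra |].
  apply shift_mul_gk'_le_sqrt; [lra | apply pos_part_ge0].
Qed.
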